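(* Let $G=A_n$ or $S_n$ with $n\ge 5$, acting naturally on the set of $k$-element subsets of $\{1,\dots,n\}$, where $1\le k<n/2$. Then $G$ is $\tfrac{3}{2}$-transitive if and only if either $k=1$, or $n=7$ and $k=2$.
   Context: A finite transitive permutation group $G$ on $\Omega$ is $\tfrac{3}{2}$-transitive if for $\alpha\in\Omega$ all orbits of $G_\alpha$ on $\Omega\setminus\{\alpha\}$ have the same size, greater than $1$. *)

From mathcomp Require Import all_boot all_fingroup all_solvable.
Set Implicit Arguments. Unset Strict Implicit. Unset Printing Implicit Defensive.
Local Open Scope group_scope.

Definition three_halves_transitive (aT : finGroupType) (D : {set aT})
    (T : finType) (to : action D T) (G : {set aT}) (Om : {set T}) : Prop :=
  [transitive G, on Om | to] /\
  forall a, a \in Om -> forall x y, x \in Om :\ a -> y \in Om :\ a ->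
    #|orbit to 'C_G[a | to] x| = #|orbit to 'C_G[a | to] y| /\
    1 < #|orbit to 'C_G[a | to] x|.

Definition ksubsets (n k : nat) : {set {set 'I_n}} :=
  [set A : {set 'I_n} | #|A| == k].

From mathcomp Require Import all_boot all_fingroup all_solvable.
From mathcomp Require Import zify.
Set Implicit Arguments. Unset Strict Implicit. Unset Printing Implicit Defensive.

(* Two labellings of the points with equal fibre sizes differ by a permutation,
   which can be taken even as soon as some label is repeated. Hence, once n > 4,
   A_n already moves a subset B to any C with |C| = |B| and |C :&: A| = |B :&: A|
   while fixing A. So the suborbits of the stabiliser of a k-set a are the sets
   of k-sets meeting a in i points, i < k, of size C(k,i) C(n-k,k-i), and the
   action is 3/2-transitive iff these sizes agree. For k >= 2, comparing i = k-1
   with i = k-2 gives k(n-k) = C(k,2) C(n-k,2), i.e. (k-1)(n-k-1) = 4, so k = 2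
   and n = 7; conversely both suborbits have size 10 there. *)

Section Relabelling.
Variables (T : finType) (l1 l2 : T -> nat).
Hypothesis card_fibre :
  forall i, #|[set z | l1 z == i]| = #|[set z | l2 z == i]|.

(* Sorting the points by label lines the two labellings up position by position. *)
Lemma perm_of_card_fibre : exists p : {perm T}, forall z, l2 (p z) = l1 z.
Proof.
set s1 := sort (relpre l1 leq) (enum T).
set s2 := sort (relpre l2 leq) (enum T).
have map_s12 : map l1 s1 = map l2 s2.
  apply: (sorted_eq leq_trans anti_leq).
  - by rewrite sorted_map; apply/sort_sorted => x y; apply: leq_total.
  - by rewrite sorted_map; apply/sort_sorted => x y; apply: leq_total.
  rewrite (permPl (perm_map l1 (permEl (perm_sort _ _)))).
  rewrite (permPr (perm_map l2 (permEl (perm_sort _ _)))).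
  apply/allP => i _; apply/eqP; rewrite !count_map.
  have count_fibre l : count (preim l (pred1 i)) (Finite.enum T) = #|[set z | l z == i]|.
    rewrite -size_filter cardE /enum_mem.
    by apply/congr1/eq_filter => z; rewrite /= inE.
  by have := card_fibre i; rewrite -!count_fibre.
have size_s1 : size s1 = #|T| by rewrite size_sort cardT.
have size_s2 : size s2 = #|T| by rewrite size_sort cardT.
have mem_s1 x : x \in s1 by rewrite mem_sort mem_enum.
have index_lt x : index x s1 < #|T| by rewrite -size_s1 index_mem.
pose f x := nth x s2 (index x s1).
have f_inj : injective f.
  move=> x y /eqP; rewrite /f (set_nth_default x y) ?size_s2 //.
  rewrite nth_uniq ?size_s2 ?sort_uniq ?enum_uniq // => /eqP eq_index.
  by rewrite -(nth_index x (mem_s1 x)) eq_index (set_nth_default y x) ?size_s1 ?nth_index.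
exists (perm f_inj) => z; rewrite permE /f.
by rewrite -(nth_map z (l2 z)) ?size_s2 // -map_s12 (nth_map z) ?size_s1 ?nth_index.
Qed.
End Relabelling.

Lemma Alt_perm_of_card_fibre (T : finType) (l1 l2 : T -> nat) x y :
    x != y -> l1 x = l1 y ->
    (forall i, #|[set z | l1 z == i]| = #|[set z | l2 z == i]|) ->
  exists2 p : {perm T}, p \in ('Alt_T)%g & forall z, l2 (p z) = l1 z.
Proof.
move=> neq_xy eq_l1xy /perm_of_card_fibre[p l2p].
(* An odd relabelling is corrected by the transposition of two points with the same label. *)
case odd_p : (odd_perm p); last by exists p; rewrite ?Alt_even ?odd_p.
exists (tperm x y * p)%g => [|z]; first by rewrite Alt_even odd_permM odd_tperm neq_xy odd_p.
by rewrite permM l2p; case: tpermP => [->|->|].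
Qed.

Section AltMovesSets.
Variables (T : finType) (A : {set T}).

Let lab (S : {set T}) (z : T) : nat := 2 * (z \in A) + (z \in S).

Let lab_fibre S i : [set z | lab S z == i] =
  match i with
  | 0 => ~: (A :|: S) | 1 => S :\: A | 2 => A :\: S | 3 => S :&: A | _ => set0
  end.
Proof.
by apply/setP => z; case: i => [|[|[|[|i]]]]; rewrite !inE /lab;
  case: (z \in A); case: (z \in S).
Qed.

Let card_lab_fibre (B C : {set T}) i : #|B| = #|C| -> #|B :&: A| = #|C :&: A| ->
  #|[set z | lab B z == i]| = #|[set z | lab C z == i]|.
Proof.
move=> eq_card eq_cardI; rewrite !lab_fibre.
case: i => [|[|[|[|i]]]] //.
- by rewrite [LHS]cardsCs [RHS]cardsCs !setCK !cardsU ![A :&: _]setIC eq_card eq_cardI.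
- by rewrite !cardsD eq_card eq_cardI.
- by rewrite !cardsD ![A :&: _]setIC eq_cardI.
Qed.

Lemma Alt_stab_set_move (B C : {set T}) :
    4 < #|T| -> #|B| = #|C| -> #|B :&: A| = #|C :&: A| ->
  exists2 p : {perm T}, p \in ('Alt_T)%g & p @: A = A /\ p @: B = C.
Proof.
move=> T_gt4 eq_card eq_cardI.
(* Pigeonhole: lab B takes only four values on more than four points. *)
have [x [y [neq_xy eq_lab]]] : exists x y, x != y /\ lab B x = lab B y.
  pose f z : 'I_4 := inord (lab B z).
  have lab_lt4 z : lab B z < 4 by rewrite /lab; case: (z \in A); case: (z \in B).
  have /dinjectivePn[x _ [y]] : ~~ injectiveb f.
    by apply: contraL T_gt4 => /injectiveP/leq_card; rewrite card_ord leqNgt.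
  rewrite !inE andbT eq_sym => neq_xy /(congr1 val); rewrite /= !inordK //.
  by exists x, y.
have [p Alt_p lab_p] :=
  Alt_perm_of_card_fibre neq_xy eq_lab (fun i => card_lab_fibre i eq_card eq_cardI).
exists p => //.
have mem_p z : (p z \in A) = (z \in A) /\ (p z \in C) = (z \in B).
  by move: (lab_p z); rewrite /lab; case: (p z \in A); case: (z \in A);
    case: (p z \in C); case: (z \in B).
by split; apply/setP => w; rewrite -[w in LHS](permKV p w) (mem_imset _ _ (@perm_inj _ p));
  case: (mem_p (p^-1 w)%g); rewrite permKV.
Qed.

End AltMovesSets.

Lemma card_draws_meet (T : finType) (A : {set T}) k j : j <= k ->
  #|[set C : {set T} | (#|C| == k) && (#|C :&: A| == j)]| =
  'C(#|A|, j) * 'C(#|~: A|, k - j).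
Proof.
move=> le_jk; pose split_at (C : {set T}) := (C :&: A, C :\: A).
have split_inj : injective split_at.
  by move=> C1 C2 [eqI eqD]; rewrite -(setID C1 A) -(setID C2 A) eqI eqD.
rewrite -(card_imset _ split_inj) -(cards_draws A) -(cards_draws (~: A)) -cardsX.
apply: eq_card => -[X Y]; rewrite inE /=; apply/imsetP/andP.
  move=> [C /[!inE] /andP[/eqP cardC /eqP cardCA] [-> ->]].
  by rewrite subsetIr setDE subsetIr -setDE cardsD cardC cardCA !eqxx.
rewrite !inE => -[/andP[sXA /eqP cardX] /andP[sYCA /eqP cardY]].
have disjYA : [disjoint Y & A] by rewrite disjoints_subset.
have meetXY : (X :|: Y) :&: A = X.
  by rewrite setIUl (setIidPl sXA) (eqP (_ : Y :&: A == set0)) ?setU0 ?setI_eq0.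
have diffXY : (X :|: Y) :\: A = Y.
  by rewrite setDUl (eqP (_ : X :\: A == set0)) ?set0U ?setD_eq0 //; apply/setDidPl.
exists (X :|: Y); last by rewrite /split_at meetXY diffXY.
by rewrite inE -(cardsID A) meetXY diffXY cardX cardY subnKC // !eqxx.
Qed.

Lemma setact_permE (T : finType) (S : {set T}) (g : {perm T}) :
  ('P^*)%act S g = g @: S.
Proof. by []. Qed.

Section AltOnSubsets.
Variables (T : finType) (G : {group {perm T}}).
Hypotheses (T_gt4 : 4 < #|T|) (sAltG : ('Alt_T \subset G)%g).

Lemma orbit_setact_astab1 (A B : {set T}) :
  orbit 'P^* 'C_G[A | 'P^*] B =
    [set C : {set T} | (#|C| == #|B|) && (#|C :&: A| == #|B :&: A|)].
Proof.
apply/setP => C; rewrite inE; apply/orbitP/andP => [[g /setIP[_ /astab1P fixA] <-]|].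
  rewrite !setact_permE in fixA *.
  rewrite -{1}fixA -imsetI; last by apply: in2W; apply: perm_inj.
  by rewrite !card_imset //; apply: perm_inj.
move=> [/eqP eq_card /eqP eq_cardI].
have [p Alt_p [fixA moveB]] := Alt_stab_set_move T_gt4 (esym eq_card) (esym eq_cardI).
by exists p => //; rewrite inE (subsetP sAltG) //=; apply/astab1P.
Qed.

Lemma card_orbit_setact_astab1 (A B : {set T}) :
  #|orbit 'P^* 'C_G[A | 'P^*] B| =
    'C(#|A|, #|B :&: A|) * 'C(#|T| - #|A|, #|B| - #|B :&: A|).
Proof.
by rewrite orbit_setact_astab1 card_draws_meet ?subset_leq_card ?subsetIl // (cardsCs (~: A)) setCK.
Qed.

Lemma orbit_setact (B : {set T}) :
  orbit 'P^* G B = [set C : {set T} | #|C| == #|B|].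
Proof.
have stab_set0 : ('C_G[set0 | 'P^*])%g = G.
  by apply/setIidPl/subsetP => g _; apply/astab1P; rewrite setact_permE imset0.
rewrite -stab_set0 orbit_setact_astab1; apply/setP => C.
by rewrite !inE !setI0 eqxx andbT.
Qed.

End AltOnSubsets.

Lemma eq_mul_bin2 k m : 2 <= k < m -> k * m = 'C(k, 2) * 'C(m, 2) -> k = 2 /\ m = 5.
Proof.
move=> /andP[k_ge2 lt_km] eq_km.
have bin2_double n : 2 * 'C(n, 2) = n * n.-1.
  by rewrite (mul_bin_left n 1) bin1 subn1 mulnC.
have : k * m * 4 = k * m * (k.-1 * m.-1).
  by rewrite {1}eq_km -[4]/(2 * 2) mulnACA ![_ * 2]mulnC !bin2_double mulnACA.
move/eqP; rewrite eqn_pmul2l => [/eqP prod4|]; last by rewrite muln_gt0; lia.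
have [lt_k2|lt_2k|eq_k2] := ltngtP k 2; first lia; last by rewrite eq_k2 mul1n in prod4; lia.
have : 2 * 3 <= k.-1 * m.-1 by apply: leq_mul; lia.
lia.
Qed.

Lemma card_setI_lt (T : finType) (A B : {set T}) :
  #|B| = #|A| -> B != A -> #|B :&: A| < #|A|.
Proof.
move=> eq_card; apply: contraNT; rewrite -leqNgt => le_AI.
have sAB : A \subset B by apply/setIidPr/eqP; rewrite eqEcard subsetIr.
by rewrite eq_sym eqEcard sAB eq_card leqnn.
Qed.

Lemma exists_draw_meet (T : finType) (A : {set T}) k j :
  j <= k -> j <= #|A| -> k - j <= #|~: A| ->
  exists B : {set T}, #|B| = k /\ #|B :&: A| = j.
Proof.
move=> le_jk le_jA le_kjCA.
have : 0 < #|[set B : {set T} | (#|B| == k) && (#|B :&: A| == j)]|.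
  by rewrite card_draws_meet // muln_gt0 !bin_gt0 le_jA le_kjCA.
by case/card_gt0P => B /[!inE] /andP[/eqP cardB /eqP cardBA]; exists B.
Qed.

Definition suborbit_size n k i := 'C(k, i) * 'C(n - k, k - i).

Section KSubsets.
Variables (n k : nat) (G : {group {perm 'I_n}}).
Hypotheses (n_gt4 : 4 < n) (sAltG : ('Alt_('I_n) \subset G)%g).

Let card_suborbit a x : a \in ksubsets n k -> x \in ksubsets n k ->
  #|orbit 'P^* 'C_G[a | 'P^*] x| = suborbit_size n k #|x :&: a|.
Proof.
rewrite !inE => /eqP cardA /eqP cardX.
by rewrite card_orbit_setact_astab1 ?card_ord // cardA cardX.
Qed.

Lemma exists_ksubset : k <= n -> exists a, a \in ksubsets n k.
Proof. by move=> le_kn; apply/card_gt0P; rewrite card_draws card_ord bin_gt0. Qed.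

Lemma three_halves_ksubsetsP : k.*2 < n ->
  three_halves_transitive 'P^* G (ksubsets n k) <->
  forall i j, i < k -> j < k ->
    suborbit_size n k i = suborbit_size n k j /\ 1 < suborbit_size n k i.
Proof.
rewrite -addnn => lt_2kn; have lt_k_nk : k < n - k by lia.
have [|a0 a0K] := exists_ksubset; first lia.
have cardA0 : #|a0| = k by move: a0K; rewrite inE => /eqP.
have meet_lt a x : a \in ksubsets n k -> x \in ksubsets n k :\ a -> #|x :&: a| < k.
  rewrite !inE => /eqP cardA /andP[neq_xa /eqP cardX].
  by rewrite -cardA card_setI_lt // cardA.
split=> [[_ three_halves] i j lt_ik lt_jk | sizes].
  have realise l : l < k -> exists2 x, x \in ksubsets n k :\ a0 & #|x :&: a0| = l.
    move=> lt_lk.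
    have [x [cardX cardXA]] : exists x : {set 'I_n}, #|x| = k /\ #|x :&: a0| = l.
      apply: exists_draw_meet (ltnW lt_lk) _ _; first by rewrite cardA0 ltnW.
      by rewrite (cardsCs (~: a0)) setCK card_ord cardA0; lia.
    exists x => //; rewrite !inE cardX eqxx andbT.
    by apply: contraTneq lt_lk => eq_xa; rewrite -cardXA eq_xa setIid cardA0 ltnn.
  have [x xK <-] := realise i lt_ik; have [y yK <-] := realise j lt_jk.
  have [x_in y_in] := (subsetP (subsetDl _ _) x xK, subsetP (subsetDl _ _) y yK).
  by rewrite -!card_suborbit //; apply: three_halves.
split.
  apply/imsetP; exists a0 => //; rewrite orbit_setact ?card_ord //.
  by apply/setP => C; rewrite !inE cardA0.
move=> a aK x y xK yK.
have [x_in y_in] := (subsetP (subsetDl _ _) x xK, subsetP (subsetDl _ _) y yK).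
by rewrite !card_suborbit //; apply: sizes; apply: meet_lt.

Qed.


End KSubsets.

Theorem lemma4p3 (n k : nat) (G : {group {perm 'I_n}}) :
  5 <= n -> 1 <= k -> k.*2 < n ->
  (G = ('Alt_('I_n))%G \/ G = ('Sym_('I_n))%G) ->
  (three_halves_transitive ('P^*)%act G (ksubsets n k) <->
   k = 1 \/ (n = 7 /\ k = 2)).
Proof.
move=> n_ge5 k_ge1 lt_2kn G_Alt_Sym.
have lt_k_nk : k < n - k by rewrite -addnn in lt_2kn; lia.
have sAltG : ('Alt_('I_n) \subset G)%g.
  by case: G_Alt_Sym => ->; [exact: subxx | exact: subsetT].
rewrite three_halves_ksubsetsP //; split=> [sizes | [k1 | [n7 k2]] i j].
- have [le_k1 | k_ge2] := leqP k 1; first by left; lia.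
  right; have [] := sizes (k - 1) (k - 2); try lia.
  rewrite /suborbit_size !bin_sub ?subKn // ?bin1 => eq_sizes _.
  by have [] := eq_mul_bin2 (_ : 2 <= k < n - k) eq_sizes; lia.
- rewrite k1; case: i j => [|i] [|j] // _ _.
  by rewrite /suborbit_size subn0 bin0 bin1 mul1n; lia.
- by rewrite n7 k2; case: i j => [|[|i]] [|[|j]].
Qed.
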